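(* Assume the observation space $\mathcal{X}$ is countable. Let $\hat\phi:\mathcal{X}\to[N]$ and $\hat g:[N]\times\mathcal{A}\times\mathcal{X}\to[0,1]$ satisfy \[ \mathbb{E}_{(x,a,x')\sim D}\bigl[\,|\hat g(\hat\phi(x),a,x')-g^{\star}(x,a,x')|\,\bigr]\le\Delta . \] Then \[ \Pr_{x_1,x_2\sim\mu\ \text{i.i.d.}}\bigl(\phi^{\star}(x_1)\ne\phi^{\star}(x_2)\ \wedge\ \hat\phi(x_1)=\hat\phi(x_2)\bigr)\ \le\ \frac{8|\mathcal{A}|^2\Delta}{\Gamma}. \]
   Context: Setting: a block MDP with finite action set $\mathcal{A}$, perfect decoder $\phi^{\star}:\mathcal{X}\to\mathcal{S}$ (emissions of distinct latent states have disjoint supports), first-step latent transition $T(\cdot\mid s,a)$, and initial latent state drawn from a distribution over a set $\mathcal{S}_1$ of $N$ initial states. Write $\mu(x)$ for the probability of the initial observation $x$, $T(x'\mid x,a)$ for the probability of the next observation $x'$ after action $a$ from initial observation $x$ (latent transition from $\phi^{\star}(x)$ times emission of $x'$), and $\rho(x')=\mathbb{E}_{x\sim\mu,a\sim\mathrm{Unif}(\mathcal{A})}[T(x'\mid x,a)]$. Define $D(x,a,x')=\frac{\mu(x)}{2|\mathcal{A}|}\{T(x'\mid x,a)+\rho(x')\}$ (a half-half mixture of real transitions and imposter transitions whose $x'$ is drawn independently) and $g^{\star}(x,a,x')=T(x'\mid x,a)/(T(x'\mid x,a)+\rho(x'))$. Margin assumption: for any two distinct initial states $s,\tilde s\in\mathcal{S}_1$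 and every $a\in\mathcal{A}$, $\|T(\cdot\mid s,a)-T(\cdot\mid\tilde s,a)\|_{\mathrm{TV}}\ge\Gamma$, with $\Gamma>0$. *)

From mathcomp Require Import all_boot all_order all_algebra.
From mathcomp Require Import all_classical all_reals all_analysis.

Set Implicit Arguments.
Unset Strict Implicit.
Unset Printing Implicit Defensive.

Import Order.TTheory GRing.Theory Num.Theory.
Local Open Scope ring_scope.
Local Open Scope classical_set_scope.

Definition is_distr (R : realType) (T : choiceType) (p : T -> R) : Prop :=
  (forall t, 0 <= p t) /\ (\esum_(t in [set: T]) (p t)%:E = 1)%E.

Definition tv_dist (R : realType) (T : choiceType) (p p' : T -> R) : \bar R :=
  ((2%:R^-1)%:E * \esum_(t in [set: T]) (`|p t - p' t|)%:E)%E.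

Section BlockMDP.
Variables (R : realType) (X S : countType) (A : finType).
(* phistar : perfect decoder; mu0 : initial latent distribution;
   q s : emission distribution of latent state s;
   Tl s a : first-step latent transition. *)
Variables (phistar : X -> S) (mu0 : S -> R) (q : S -> X -> R)
          (Tl : S -> A -> S -> R).

(* probability of the initial observation x (emission supports are disjoint,
   so only the latent state phistar x contributes) *)
Definition mu_obs (x : X) : R := mu0 (phistar x) * q (phistar x) x.

Definition T_obs (x : X) (a : A) (x' : X) : R :=
  Tl (phistar x) a (phistar x') * q (phistar x') x'.

Definition rho_obs (x' : X) : R :=
  fine (\esum_(xa in [set: X * A])
          (mu_obs xa.1 * #|A|%:R^-1 * T_obs xa.1 xa.2 x')%:E)%E.

Definition D_dist (x : X) (a : A) (x' : X) : R :=
  mu_obs x / (2 * #|A|%:R) * (T_obs x a x' + rho_obs x').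

Definition gstar (x : X) (a : A) (x' : X) : R :=
  T_obs x a x' / (T_obs x a x' + rho_obs x').

Definition expected_err (N : nat) (phihat : X -> 'I_N)
  (ghat : 'I_N -> A -> X -> R) : \bar R :=
  (\esum_(t in [set: X * A * X])
     (D_dist t.1.1 t.1.2 t.2 *
      `|ghat (phihat t.1.1) t.1.2 t.2 - gstar t.1.1 t.1.2 t.2|)%:E)%E.

Definition merge_prob (N : nat) (phihat : X -> 'I_N) : \bar R :=
  (\esum_(p in [set p : X * X | phistar p.1 <> phistar p.2 /\
                                 phihat p.1 = phihat p.2])
     (mu_obs p.1 * mu_obs p.2)%:E)%E.

End BlockMDP.

(* If [phihat x1 = phihat x2], the single predictor [ghat (phihat x1) a] estimates
   both [g*(x1,a,.)] and [g*(x2,a,.)].  Writing [g* = T / (T + rho)], the gap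
   [T(x'|x1,a) - T(x'|x2,a)] is [(T1 + rho)(T2 + rho)/rho] times the gap of the
   [g*]'s, so the triangle inequality through the common prediction bounds
   [mu x1 mu x2 |T1 - T2|] by [2|A|] times the D-weighted error at [x1] times the
   weight [mu x2 (T2 + rho)/rho] at [x2], plus the symmetric term.  Summed over [x2]
   these weights total at most [|A| + 1], because [sum_x mu x T(x'|x,a) <= |A| rho x'].
   Summed over [x'], the left side is [2 TV >= 2 Gamma] when the latent states differ.
   Hence [2|A| Gamma Pr(merge) <= 4|A|(|A|+1) Delta]. *)

From mathcomp Require Import all_boot all_order all_algebra.
From mathcomp Require Import all_classical all_reals all_analysis.
From mathcomp Require Import ring lra.

Import Order.TTheory GRing.Theory Num.Theory.
Local Open Scope ring_scope.
Local Open Scope classical_set_scope.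

Section esum_nonneg.
Context {R : realType} {T : choiceType}.
Implicit Types (I J : set T) (a : T -> \bar R).

Lemma ge0_esumZl I a (r : R) : 0 <= r -> (forall i, I i -> 0 <= a i)%E ->
  (\esum_(i in I) (r%:E * a i) = r%:E * \esum_(i in I) a i)%E.
Proof.
move=> r0 a0; rewrite /esum -ereal_supZl//; last first.
  by apply/set0P; exists 0%E; exists set0; [exact: fsets_set0|rewrite fsbig_set0].
have sumZ F : fsets I F ->
    (\sum_(i \in F) (r%:E * a i) = r%:E * \sum_(i \in F) a i)%E.
  move=> [finF FI]; rewrite !fsbig_finite// !big_seq ge0_sume_distrr// => i.
  by rewrite in_fset_set// inE => /FI; exact: a0.
congr ereal_sup; apply/seteqP; split => y /=.
- by move=> [F IF <-]; exists (\sum_(i \in F) a i); [exists F|rewrite sumZ].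
- by move=> [_ [F IF <-] <-]; exists F; rewrite ?sumZ.
Qed.

Lemma le_esum_subset I J a : I `<=` J -> (forall i, J i -> 0 <= a i)%E ->
  (\esum_(i in I) a i <= \esum_(i in J) a i)%E.
Proof.
move=> IJ a0; rewrite (esum_mkcond I) (esum_mkcond J); apply: le_esum => i _.
case: ifPn => [/[!inE] /IJ Ji|_]; first by rewrite ifT// inE.
by case: ifPn => // /[!inE] /a0.
Qed.

Lemma le_term_esum I a t : I t -> (forall i, I i -> 0 <= a i)%E ->
  (a t <= \esum_(i in I) a i)%E.
Proof.
by move=> It a0; rewrite -esum_set1 ?a0//; apply: le_esum_subset => // _ ->.
Qed.

Lemma esum_supp1 a t : (forall i, i <> t -> a i = 0%E) -> (0 <= a t)%E ->
  (\esum_(i in [set: T]) a i = a t)%E.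
Proof.
move=> a0 at0; rewrite (esumID [set t]); last first.
  by move=> i _; have [->|/eqP/a0 ->] := eqVneq i t.
by rewrite setTI esum_set1// esum1 ?adde0// => i [_ /= /a0].
Qed.

End esum_nonneg.

Lemma esum_pairT {R : realType} {T1 T2 : choiceType} (f : T1 * T2 -> \bar R) :
  (forall p, 0 <= f p)%E ->
  (\esum_(p in [set: T1 * T2]) f p =
   \esum_(x in [set: T1]) \esum_(y in [set: T2]) f (x, y))%E.
Proof.
move=> f0; rewrite (esum_esum (a := fun x y => f (x, y)))//.
have -> : [set: T1] `*`` (fun=> [set: T2]) = [set: T1 * T2] by apply/seteqP.
by apply: eq_esum => -[].
Qed.

Lemma esum_pair_swap {R : realType} {T1 T2 : choiceType}
    (f : T1 * T2 -> \bar R) :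
  (\esum_(p in [set: T1 * T2]) f p = \esum_(p in [set: T2 * T1]) f (p.2, p.1))%E.
Proof.
apply: reindex_esum; split=> // [[x y] [x' y'] _ _ [-> ->]//|[x y] _].
by exists (y, x).
Qed.

Lemma exchange_esum {R : realType} {T1 T2 : choiceType}
    (f : T1 -> T2 -> \bar R) :
  (forall x y, 0 <= f x y)%E ->
  (\esum_(x in [set: T1]) \esum_(y in [set: T2]) f x y =
   \esum_(y in [set: T2]) \esum_(x in [set: T1]) f x y)%E.
Proof.
move=> f0; rewrite -(esum_pairT (fun p => f p.1 p.2))// esum_pair_swap.
by rewrite esum_pairT.
Qed.

Lemma le_esum_mul {R : realType} {T1 T2 : choiceType}
    (u : T1 -> R) (w : T2 -> R) (c : R) :
  (forall x, 0 <= u x) -> (forall y, 0 <= w y) ->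
  (\esum_(y in [set: T2]) (w y)%:E <= c%:E)%E ->
  (\esum_(p in [set: T1 * T2]) (u p.1 * w p.2)%:E <=
   c%:E * \esum_(x in [set: T1]) (u x)%:E)%E.
Proof.
move=> u0 w0 wc; have c0 : 0 <= c.
  by rewrite -lee_fin (le_trans _ wc)// esum_ge0// => y _; rewrite lee_fin.
rewrite esum_pairT => [|p]; last by rewrite lee_fin mulr_ge0.
rewrite -ge0_esumZl// => [|x _]; last by rewrite lee_fin.
apply: le_esum => x _ /=; rewrite muleC.
under eq_esum do rewrite EFinM.
by rewrite ge0_esumZl// ?lee_wpmul2l ?lee_fin// => y _; rewrite lee_fin.
Qed.

Lemma esum_cst_card {R : realType} {A : finType} (c : R) : 0 <= c ->
  (\esum_(a in [set: A]) c%:E = (#|A|%:R * c)%:E)%E.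
Proof.
move=> c0; rewrite esum_fset//; last exact: finite_finset.
rewrite (fsbigE (enum A)) ?enum_uniq// => [|i _]; last by rewrite mem_enum.
under eq_bigl do rewrite in_setT.
by rewrite sumEFin big_const_seq /= count_predT -cardE iter_addr_0 mulr_natl.
Qed.

Lemma distr_le1 {R : realType} {T : choiceType} (p : T -> R) t :
  is_distr p -> p t <= 1.
Proof.
move=> [p0 p1]; rewrite -lee_fin -p1.
by apply: (@le_term_esum _ _ _ (fun t => (p t)%:E)) => // i _; rewrite lee_fin.
Qed.

Lemma dist_le_ratio_errors {R : realFieldType} (m1 m2 t1 t2 r h : R) :
  0 <= m1 -> 0 <= m2 -> 0 <= t1 -> 0 <= t2 -> 0 < r ->
  m1 * m2 * `|t1 - t2| <=
  m1 * (t1 + r) * `|h - t1 / (t1 + r)| * (m2 * (t2 + r) / r) +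
  m2 * (t2 + r) * `|h - t2 / (t2 + r)| * (m1 * (t1 + r) / r).
Proof.
move=> m1_ge0 m2_ge0 t1_ge0 t2_ge0 r_gt0.
have t1r_neq0 : t1 + r != 0 by rewrite lt0r_neq0// ltr_wpDl.
have t2r_neq0 : t2 + r != 0 by rewrite lt0r_neq0// ltr_wpDl.
set c := (t1 + r) * (t2 + r) / r.
have r_ge0 := ltW r_gt0.
have c_ge0 : 0 <= c by rewrite /c !(mulr_ge0, invr_ge0, addr_ge0).
have -> : t1 - t2 = c * (t1 / (t1 + r) - t2 / (t2 + r)).
  by rewrite /c; field; rewrite t1r_neq0 t2r_neq0 lt0r_neq0.
set g1 := t1 / (t1 + r); set g2 := t2 / (t2 + r).
have -> : m1 * (t1 + r) * `|h - g1| * (m2 * (t2 + r) / r) +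
          m2 * (t2 + r) * `|h - g2| * (m1 * (t1 + r) / r) =
          m1 * m2 * (c * (`|h - g1| + `|h - g2|)).
  by rewrite /c; field; rewrite lt0r_neq0.
rewrite normrM (ger0_norm c_ge0) ler_wpM2l ?mulr_ge0// ler_wpM2l//.
by rewrite (le_trans (ler_distD h _ _))// distrC.
Qed.

Section block_mdp.
Context {R : realType} {X S : countType} {A : finType}.
Context {phistar : X -> S} {mu0 : S -> R} {q : S -> X -> R}
  {Tl : S -> A -> S -> R}.
Hypothesis A_gt0 : (0 < #|A|)%N.
Hypothesis mu0_distr : is_distr mu0.
Hypothesis q_distr : forall s, is_distr (q s).
Hypothesis q_supp : forall s x, q s x != 0 -> phistar x = s.
Hypothesis Tl_distr : forall s a, is_distr (Tl s a).

Local Notation mu := (mu_obs phistar mu0 q).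
Local Notation Tr := (T_obs phistar q Tl).
Local Notation rho := (rho_obs phistar mu0 q Tl).
Local Notation K := (#|A|%:R : R).

Let K_gt0 : 0 < K. Proof. by rewrite ltr0n. Qed.

Let q_ge0 s x : 0 <= q s x. Proof. by case: (q_distr s). Qed.

Lemma mu_obs_ge0 x : 0 <= mu x.
Proof. by apply: mulr_ge0 => //; case: mu0_distr. Qed.

Lemma T_obs_ge0 x a x' : 0 <= Tr x a x'.
Proof. by apply: mulr_ge0 => //; case: (Tl_distr (phistar x) a). Qed.

Lemma T_obs_le1 x a x' : Tr x a x' <= 1.
Proof.
apply: mulr_ile1; rewrite ?q_ge0 ?distr_le1//.
by case: (Tl_distr (phistar x) a).
Qed.

Lemma esum_emission (f : S -> R) : (forall s, 0 <= f s) ->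
  (\esum_(x in [set: X]) (f (phistar x) * q (phistar x) x)%:E =
   \esum_(s in [set: S]) (f s)%:E)%E.
Proof.
move=> f_ge0; have q_off s x : s <> phistar x -> q s x = 0.
  by move=> sx; apply: contra_notP sx => /eqP/q_supp ->.
transitivity (\esum_(x in [set: X]) \esum_(s in [set: S]) (f s * q s x)%:E)%E.
  apply: eq_esum => x _; rewrite (@esum_supp1 _ _ _ (phistar x))//.
  - by move=> s /q_off ->; rewrite mulr0.
  - by rewrite lee_fin mulr_ge0.
rewrite exchange_esum => [|x s]; last by rewrite lee_fin mulr_ge0.
apply: eq_esum => s _; under eq_esum do rewrite EFinM.
rewrite ge0_esumZl// => [|x _]; last by rewrite lee_fin.
by case: (q_distr s) => _ ->; rewrite mule1.
Qed.

Lemma esum_mu_obs : (\esum_(x in [set: X]) (mu x)%:E = 1)%E.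
Proof. by case: mu0_distr => mu0_ge0 <-; exact: esum_emission. Qed.

Let muK_ge0 x : 0 <= mu x * K^-1.
Proof. by rewrite mulr_ge0 ?mu_obs_ge0// invr_ge0 ler0n. Qed.

Let summand_ge0 x a x' : 0 <= mu x * K^-1 * Tr x a x'.
Proof. by rewrite mulr_ge0 ?T_obs_ge0. Qed.

Lemma rho_obsE x' : (rho x')%:E =
  (\esum_(x in [set: X]) \esum_(a in [set: A]) (mu x * K^-1 * Tr x a x')%:E)%E.
Proof.
rewrite /rho_obs esum_pairT /= => [|xa]; last by rewrite lee_fin.
have le1 : (\esum_(x in [set: X]) \esum_(a in [set: A])
             (mu x * K^-1 * Tr x a x')%:E <= 1)%E.
  rewrite -esum_mu_obs; apply: le_esum => x _.
  apply: (@le_trans _ _ (\esum_(a in [set: A]) (mu x * K^-1)%:E)%E).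
    by apply: le_esum => a _; rewrite lee_fin ler_piMr ?T_obs_le1.
  by rewrite esum_cst_card// mulrCA divff ?mulr1 ?lt0r_neq0.
rewrite fineK// ge0_fin_numE ?(le_lt_trans le1) ?ltry//.
by apply: esum_ge0 => x _; apply: esum_ge0 => a _; rewrite lee_fin.
Qed.

Lemma rho_obs_ge0 x' : 0 <= rho x'.
Proof.
rewrite -lee_fin rho_obsE.
by apply: esum_ge0 => x _; apply: esum_ge0 => a _; rewrite lee_fin.
Qed.

Lemma esum_mu_T_obs_le a x' :
  (\esum_(x in [set: X]) (mu x * Tr x a x')%:E <= (K * rho x')%:E)%E.
Proof.
rewrite EFinM rho_obsE -ge0_esumZl ?ler0n// => [|x _]; last first.
  by apply: esum_ge0 => b _; rewrite lee_fin.
apply: le_esum => x _.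
have -> : mu x * Tr x a x' = K * (mu x * K^-1 * Tr x a x').
  by field; rewrite lt0r_neq0.
rewrite EFinM lee_wpmul2l ?lee_fin ?ler0n//.
apply: (@le_term_esum _ _ _ (fun b => (mu x * K^-1 * Tr x b x')%:E)) => // b _.
by rewrite lee_fin.
Qed.

Lemma mu_T_obs_rho0 x a x' : rho x' = 0 -> mu x * Tr x a x' = 0.
Proof.
move=> rho0; apply/eqP; rewrite eq_le mulr_ge0 ?mu_obs_ge0 ?T_obs_ge0// andbT.
rewrite -lee_fin -(mulr0 K) -rho0; apply: le_trans (esum_mu_T_obs_le a x').
apply: (@le_term_esum _ _ _ (fun y => (mu y * Tr y a x')%:E)) => // y _.
by rewrite lee_fin mulr_ge0 ?mu_obs_ge0 ?T_obs_ge0.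
Qed.

Definition mix_ratio x a x' := mu x * (Tr x a x' + rho x') / rho x'.

Lemma mix_ratio_ge0 x a x' : 0 <= mix_ratio x a x'.
Proof.
rewrite mulr_ge0 ?invr_ge0 ?rho_obs_ge0// mulr_ge0 ?mu_obs_ge0//.
by rewrite addr_ge0 ?T_obs_ge0 ?rho_obs_ge0.
Qed.

Lemma esum_mix_ratio_le a x' :
  (\esum_(x in [set: X]) (mix_ratio x a x')%:E <= (K + 1)%:E)%E.
Proof.
have [rho0|rho_neq0] := eqVneq (rho x') 0.
  rewrite esum1 ?lee_fin ?addr_ge0 ?ler0n// => x _.
  by rewrite /mix_ratio rho0 invr0 mulr0.
have rho_gt0 : 0 < rho x' by rewrite lt0r rho_neq0 rho_obs_ge0.
have split_ratio x : (mix_ratio x a x')%:E =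
    ((rho x')^-1%:E * (mu x * Tr x a x')%:E + (mu x)%:E)%E.
  by rewrite -EFinM -EFinD /mix_ratio; congr EFin; field.
under eq_esum do rewrite split_ratio.
rewrite esumD => [||x _]; last 2 first.
- move=> x _; rewrite mule_ge0 ?lee_fin ?invr_ge0 ?rho_obs_ge0//.
  by rewrite mulr_ge0 ?mu_obs_ge0 ?T_obs_ge0.
- by rewrite lee_fin mu_obs_ge0.
rewrite ge0_esumZl ?invr_ge0 ?rho_obs_ge0// => [|x _]; last first.
  by rewrite lee_fin mulr_ge0 ?mu_obs_ge0 ?T_obs_ge0.
rewrite esum_mu_obs EFinD leeD2r//.
apply: le_trans (lee_wpmul2l _ (esum_mu_T_obs_le a x')) _.
  by rewrite lee_fin invr_ge0 rho_obs_ge0.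
by rewrite -EFinM lee_fin mulrCA mulVf ?mulr1.
Qed.

Lemma esum_dist_T_obs x1 x2 a :
  (\esum_(x' in [set: X]) (`|Tr x1 a x' - Tr x2 a x'|)%:E =
   2%:E * tv_dist (Tl (phistar x1) a) (Tl (phistar x2) a))%E.
Proof.
rewrite /tv_dist muleA -EFinM mulfV ?pnatr_eq0// mul1e -esum_emission//.
by apply: eq_esum => x' _; rewrite -mulrBl normrM (ger0_norm (q_ge0 _ _)).
Qed.

Lemma le_esum_dist_T_obs x1 x2 (Gamma : R) : 0 <= Gamma ->
  (forall s s' a, mu0 s != 0 -> mu0 s' != 0 -> s != s' ->
     (Gamma%:E <= tv_dist (Tl s a) (Tl s' a))%E) ->
  phistar x1 != phistar x2 ->
  ((2 * K * Gamma * (mu x1 * mu x2))%:E <=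
   \esum_(a in [set: A]) \esum_(x' in [set: X])
     (mu x1 * mu x2 * `|Tr x1 a x' - Tr x2 a x'|)%:E)%E.
Proof.
move=> Gamma_ge0 margin neq12.
have mu12_ge0 : 0 <= mu x1 * mu x2 by rewrite mulr_ge0 ?mu_obs_ge0.
have [mu12_0|] := eqVneq (mu x1 * mu x2) 0.
  rewrite mu12_0 mulr0; apply: esum_ge0 => a _; apply: esum_ge0 => x' _.
  by rewrite mul0r.
rewrite mulf_eq0 negb_or => /andP[mu1_neq0 mu2_neq0].
have mu0_neq0 x : mu x != 0 -> mu0 (phistar x) != 0.
  by apply: contraNneq => mu0_0; rewrite /mu_obs mu0_0 mul0r.
have -> : 2 * K * Gamma * (mu x1 * mu x2) = K * (mu x1 * mu x2 * (2 * Gamma)).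
  by ring.
rewrite -esum_cst_card; last by rewrite mulr_ge0// mulr_ge0.
apply: le_esum => a _.
under eq_esum do rewrite EFinM.
rewrite ge0_esumZl// esum_dist_T_obs !EFinM.
rewrite lee_wpmul2l ?lee_fin// lee_wpmul2l ?lee_fin//.
by apply: margin => //; apply: mu0_neq0.
Qed.

Context {N : nat} (phihat : X -> 'I_N) (ghat : 'I_N -> A -> X -> R).

Definition err_density x a x' := D_dist phistar mu0 q Tl x a x' *
  `|ghat (phihat x) a x' - gstar phistar mu0 q Tl x a x'|.

Lemma err_density_ge0 x a x' : 0 <= err_density x a x'.
Proof.
rewrite mulr_ge0// mulr_ge0 ?addr_ge0 ?T_obs_ge0 ?rho_obs_ge0//.
by rewrite divr_ge0 ?mu_obs_ge0// mulr_ge0 ?ler0n.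
Qed.

Let err_ge0 x a x' : (0 <= (err_density x a x')%:E)%E.
Proof. by rewrite lee_fin err_density_ge0. Qed.

Lemma expected_errE : expected_err phistar mu0 q Tl phihat ghat =
  (\esum_(a in [set: A]) \esum_(x' in [set: X]) \esum_(x in [set: X])
     (err_density x a x')%:E)%E.
Proof.
rewrite /expected_err esum_pairT => [|t]; last exact: err_ge0.
rewrite esum_pairT /= => [|xa]; last by apply: esum_ge0 => x' _; exact: err_ge0.
rewrite exchange_esum => [|x a]; last by apply: esum_ge0 => x' _; exact: err_ge0.
by apply: eq_esum => a _; rewrite exchange_esum => [//|x x']; exact: err_ge0.
Qed.

Lemma expected_err_ge0 : (0 <= expected_err phistar mu0 q Tl phihat ghat)%E.
Proof. by apply: esum_ge0 => t _; exact: err_ge0. Qed.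

Definition pair_err (p : X * X) a x' :=
  2 * K * (err_density p.1 a x' * mix_ratio p.2 a x' +
           err_density p.2 a x' * mix_ratio p.1 a x').

Let pair_err_ge0 p a x' : (0 <= (pair_err p a x')%:E)%E.
Proof.
rewrite lee_fin mulr_ge0 ?mulr_ge0 ?ler0n// addr_ge0//.
  by rewrite mulr_ge0 ?err_density_ge0 ?mix_ratio_ge0.
by rewrite mulr_ge0 ?err_density_ge0 ?mix_ratio_ge0.
Qed.

Lemma dist_T_obs_le_pair_err x1 x2 a x' : phihat x1 = phihat x2 ->
  mu x1 * mu x2 * `|Tr x1 a x' - Tr x2 a x'| <= pair_err (x1, x2) a x'.
Proof.
move=> same_cluster.
have [rho0|rho_neq0] := eqVneq (rho x') 0.
  have mu12_ge0 : 0 <= mu x1 * mu x2 by rewrite mulr_ge0 ?mu_obs_ge0.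
  rewrite -(ger0_norm mu12_ge0) -normrM mulrBr (mulrAC (mu x1)).
  rewrite -[mu x1 * mu x2 * _]mulrA !mu_T_obs_rho0// mulr0 mul0r subrr normr0.
  by rewrite -lee_fin.
have rho_gt0 : 0 < rho x' by rewrite lt0r rho_neq0 rho_obs_ge0.
have scale x e w : 2 * K * (D_dist phistar mu0 q Tl x a x' * e * w) =
    mu x * (Tr x a x' + rho x') * e * w.
  by rewrite /D_dist; field; rewrite lt0r_neq0.
rewrite /pair_err /err_density mulrDr !scale /gstar same_cluster.
by apply: dist_le_ratio_errors; rewrite ?mu_obs_ge0 ?T_obs_ge0.
Qed.

Lemma merged_pair_le (Gamma : R) x1 x2 : 0 <= Gamma ->
  (forall s s' a, mu0 s != 0 -> mu0 s' != 0 -> s != s' ->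
     (Gamma%:E <= tv_dist (Tl s a) (Tl s' a))%E) ->
  phistar x1 != phistar x2 -> phihat x1 = phihat x2 ->
  ((2 * K * Gamma * (mu x1 * mu x2))%:E <=
   \esum_(a in [set: A]) \esum_(x' in [set: X]) (pair_err (x1, x2) a x')%:E)%E.
Proof.
move=> Gamma_ge0 margin neq12 same_cluster.
apply: le_trans (le_esum_dist_T_obs x1 x2 Gamma Gamma_ge0 margin neq12) _.
apply: le_esum => a _; apply: le_esum => x' _.
by rewrite lee_fin dist_T_obs_le_pair_err.
Qed.

Lemma esum_pair_err_le a x' :
  (\esum_(p in [set: X * X]) (pair_err p a x')%:E <=
   (4 * K * (K + 1))%:E * \esum_(x in [set: X]) (err_density x a x')%:E)%E.
Proof.
have cross_le := le_esum_mul _ _ _ (fun x => err_density_ge0 x a x')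
  (fun y => mix_ratio_ge0 y a x') (esum_mix_ratio_le a x').
have two_K_ge0 : 0 <= 2 * K by rewrite mulr_ge0 ?ler0n.
have cross_ge0 x y : (0 <= (err_density x a x' * mix_ratio y a x')%:E)%E.
  by rewrite lee_fin mulr_ge0 ?err_density_ge0 ?mix_ratio_ge0.
under eq_esum do rewrite EFinM EFinD.
rewrite ge0_esumZl// => [|p _]; last exact: adde_ge0.
rewrite esumD => [|p _|p _]; try exact: cross_ge0.
rewrite [X in (_ + X)%E]esum_pair_swap /=.
rewrite (_ : 4 * K * (K + 1) = 2 * K * (K + 1 + (K + 1))); last by ring.
rewrite [(2 * K * _)%:E]EFinM -muleA lee_wpmul2l ?lee_fin// EFinD.
by rewrite ge0_muleDl ?lee_fin ?addr_ge0 ?ler0n// leeD.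
Qed.

Lemma merge_prob_le (Gamma : R) : 0 <= Gamma ->
  (forall s s' a, mu0 s != 0 -> mu0 s' != 0 -> s != s' ->
     (Gamma%:E <= tv_dist (Tl s a) (Tl s' a))%E) ->
  ((2 * K * Gamma)%:E * merge_prob phistar mu0 q phihat <=
   (4 * K * (K + 1))%:E * expected_err phistar mu0 q Tl phihat ghat)%E.
Proof.
move=> Gamma_ge0 margin.
have c_ge0 : 0 <= 2 * K * Gamma by rewrite !mulr_ge0 ?ler0n.
have c'_ge0 : 0 <= 4 * K * (K + 1) by rewrite !mulr_ge0 ?addr_ge0 ?ler0n.
rewrite /merge_prob -ge0_esumZl//; last first.
  by move=> p _; rewrite lee_fin mulr_ge0 ?mu_obs_ge0.
apply: (@le_trans _ _ (\esum_(p in [set: X * X]) \esum_(a in [set: A])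
    \esum_(x' in [set: X]) (pair_err p a x')%:E)%E).
  apply: (le_trans _ (le_esum_subset _ _ _ (subsetT _) _)); last first.
    by move=> p _; apply: esum_ge0 => a _; apply: esum_ge0.
  apply: le_esum => -[x1 x2] [/= /eqP neq12 same_cluster]; rewrite -EFinM.
  exact: merged_pair_le.
rewrite exchange_esum => [|p a]; last by apply: esum_ge0.
under eq_esum do rewrite exchange_esum//.
rewrite expected_errE -ge0_esumZl//; last first.
  by move=> a _; do 2 apply: esum_ge0 => ? _.
apply: le_esum => a _; rewrite -ge0_esumZl//; last first.
  by move=> x' _; apply: esum_ge0.
by apply: le_esum => x' _; apply: esum_pair_err_le.
Qed.

End block_mdp.

Theorem lemma10 (R : realType) (X S : countType) (A : finType) (N : nat)
  (phistar : X -> S) (S1 : seq S) (mu0 : S -> R) (q : S -> X -> R)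
  (Tl : S -> A -> S -> R) (Gamma Delta : R)
  (phihat : X -> 'I_N) (ghat : 'I_N -> A -> X -> R) :
  (0 < #|A|)%N ->
  uniq S1 -> size S1 = N ->
  is_distr mu0 -> (forall s, mu0 s != 0 -> s \in S1) ->
  (forall s, is_distr (q s)) ->
  (forall s x, q s x != 0 -> phistar x = s) ->
  (forall s a, is_distr (Tl s a)) ->
  0 < Gamma ->
  (forall s s' a, s \in S1 -> s' \in S1 -> s != s' ->
     (Gamma%:E <= tv_dist (Tl s a) (Tl s' a))%E) ->
  (forall i a x, 0 <= ghat i a x <= 1) ->
  (expected_err phistar mu0 q Tl phihat ghat <= Delta%:E)%E ->
  (merge_prob phistar mu0 q phihat
     <= (8 * #|A|%:R ^+ 2 * Delta / Gamma)%:E)%E.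
Proof.
move=> A_gt0 _ _ mu0_distr mu0_S1 q_distr q_supp Tl_distr Gamma_gt0 margin _ err_le.
set K : R := #|A|%:R.
have K_ge1 : 1 <= K by rewrite ler1n.
have err_ge0 := expected_err_ge0 A_gt0 mu0_distr q_distr q_supp Tl_distr phihat ghat.
have Delta_ge0 : 0 <= Delta by rewrite -lee_fin (le_trans err_ge0).
have merge_le := merge_prob_le A_gt0 mu0_distr q_distr q_supp Tl_distr phihat ghat
  Gamma (ltW Gamma_gt0) (fun s s' a h h' => margin s s' a (mu0_S1 s h) (mu0_S1 s' h')).
have c_gt0 : 0 < 2 * K * Gamma by rewrite !mulr_gt0// /K ltr0n.
rewrite -(lee_pmul2l (x := (2 * K * Gamma)%:E)) ?lte_fin//.
apply: le_trans merge_le _; apply: le_trans (lee_wpmul2l _ err_le) _.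
  by rewrite lee_fin !mulr_ge0 ?addr_ge0 ?ler0n.
rewrite -!EFinM lee_fin.
have -> : 2 * K * Gamma * (8 * K ^+ 2 * Delta / Gamma) = 16 * K ^+ 3 * Delta.
  by field; rewrite lt0r_neq0.
by rewrite ler_wpM2r//; nra.
Qed.
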